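(* Let $(M,d)$ be a metric space and let $X,Y,Z\subseteq M$. Let $\mathcal{N}$ be a $\sigma$-algebra of subsets of $Y$ containing all Borel subsets of $Y$, and let $\nu$ be a measure on $\mathcal{N}$ with $\nu(Y)<+\infty$. Let $\upsilon_Y\in]0,+\infty[$ and assume that $Y$ is upper $\upsilon_Y$-Ahlfors regular with respect to $X\cup Z$. Let $s_1,s_2\in[0,\upsilon_Y[$. If $s_1+s_2=\upsilon_Y$, assume furthermore that $Y$ is strongly upper $\upsilon_Y$-Ahlfors regular with respect to $X\cup Z$. Then there exists a constant $c\in]0,+\infty[$ such that \[ \int_Y\frac{d\nu(y)}{d(x,y)^{s_1}d(y,z)^{s_2}}\leq \begin{cases} c\,\bigl(1+d(x,z)^{\upsilon_Y-(s_1+s_2)}\bigr) & \text{if } (x,z)\in X\times Z,\ s_1+s_2<\upsilon_Y,\\[2pt] c\,\bigl(1+|\log d(x,z)|\bigr) & \text{if } (x,z)\in X\times Z,\ x\neq z,\ s_1+s_2=\upsilon_Y,\\[2pt] c\, d(x,z)^{\upsilon_Y-(s_1+s_2)} & \text{if } (x,z)\in X\times Z,\ x\neq z,\ s_1+s_2>\upsilon_Y. \end{cases} \]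
   Context: For $\xi\in M$, $r>0$, $B(\xi,r)=\{\eta\in M: d(\xi,\eta)<r\}$, and $B(\xi,0)=\emptyset$. For $W\subseteq M$ and $\upsilon\in]0,+\infty[$: $Y$ is upper $\upsilon$-Ahlfors regular with respect to $W$ if there exist $r_0\in]0,+\infty]$ and $c_0\in]0,+\infty[$ such that $\nu(B(x,r)\cap Y)\leq c_0 r^{\upsilon}$ for all $x\in W$ and all $r\in]0,r_0[$. $Y$ is strongly upper $\upsilon$-Ahlfors regular with respect to $W$ if there exist $r_0\in]0,+\infty]$ and $c_0\in]0,+\infty[$ such that $\nu((B(x,r_2)\setminus B(x,r_1))\cap Y)\leq c_0(r_2^{\upsilon}-r_1^{\upsilon})$ for all $x\in W$ and all $r_1,r_2\in[0,r_0[$ with $r_1<r_2$. Integrands of the form $d(x,y)^{-s}$ with $s>0$ are understood as $+\infty$ where $d(x,y)=0$. *)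

From HB Require Import structures.
From mathcomp Require Import all_boot all_order all_algebra.
From mathcomp Require Import all_classical all_reals all_analysis.
Set Implicit Arguments. Unset Strict Implicit. Unset Printing Implicit Defensive.
Import Order.TTheory GRing.Theory Num.Theory.
Local Open Scope classical_set_scope.
Local Open Scope ring_scope.

Definition is_metric (R : realType) (M : Type) (d : M -> M -> R) : Prop :=
  [/\ (forall x y, 0 <= d x y),
      (forall x y, d x y = 0 <-> x = y),
      (forall x y, d x y = d y x) &
      (forall x y z, d x z <= d x y + d y z)].

Definition dball (R : realType) (M : Type) (d : M -> M -> R) (x : M) (r : R)
  : set M := [set y | d x y < r].

Definition dopen (R : realType) (M : Type) (d : M -> M -> R) (O : set M) : Prop :=
  forall x, O x -> exists2 r : R, 0 < r & dball d x r `<=` O.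

Definition upper_ahlfors (R : realType) (dsp : measure_display)
  (M : measurableType dsp) (d : M -> M -> R) (nu : set M -> \bar R)
  (Y W : set M) (u : R) : Prop :=
  exists r0 : \bar R, (0 < r0)%E /\ exists2 c0 : R, 0 < c0 &
    forall x r, W x -> 0 < r -> (r%:E < r0)%E ->
      (nu (dball d x r `&` Y) <= (c0 * r `^ u)%:E)%E.

Definition strongly_upper_ahlfors (R : realType) (dsp : measure_display)
  (M : measurableType dsp) (d : M -> M -> R) (nu : set M -> \bar R)
  (Y W : set M) (u : R) : Prop :=
  exists r0 : \bar R, (0 < r0)%E /\ exists2 c0 : R, 0 < c0 &
    forall x r1 r2, W x -> 0 <= r1 -> r1 < r2 -> (r2%:E < r0)%E ->
      (nu ((dball d x r2 `\` dball d x r1) `&` Y)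
         <= (c0 * (r2 `^ u - r1 `^ u))%:E)%E.

(* t^{-s} in [0,+oo], with the convention t^{-s} = +oo when t = 0 and s > 0
   (and t^0 = 1). *)
Definition invpow (R : realType) (s t : R) : \bar R :=
  if (0 < s) && (t == 0) then +oo%E else (t `^ (- s))%:E.

From HB Require Import structures.
From mathcomp Require Import all_boot all_order all_algebra.
From mathcomp Require Import all_classical all_reals all_analysis.
From mathcomp Require Import measurable_realfun ring lra.
Set Implicit Arguments. Unset Strict Implicit. Unset Printing Implicit Defensive.
Import Order.TTheory GRing.Theory Num.Theory.
Local Open Scope classical_set_scope.
Local Open Scope ring_scope.

(** Split [Y] according to whether [y] is closer to [x] or to [z].  On the part
    closer to [x] we have [d y z >= d x y], and [d y z > d x z / 2] as soon as
    [d x y < d x z / 2]; so there the kernel is at most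
    [(d x z / 2) ^- s2 * d x y ^- s1] near [x] and [d x y ^- (s1 + s2)] away
    from it.  A single power [d w y ^- a] over a range of scales is dominated
    by a series [\sum_j c_j 1_(B(w, r_j))] with geometrically spaced radii,
    whose integral is at most [C \sum_j c_j r_j ^ u] once upper Ahlfors
    regularity is extended to all radii (possible because [nu Y] is finite).
    This geometric series converges at small scales when [a < u] and at large
    scales when [a > u]; when [a = u] each shell between [d x z / 2] and [1]
    contributes a constant, which produces the logarithm. *)

Lemma ge0_le_integral_nonmeasurable (R : realType) (dsp : measure_display)
    (T : measurableType dsp) (mu : {measure set T -> \bar R}) (D : set T)
    (f g : T -> \bar R) :
  (forall x, D x -> (0 <= f x)%E) -> (forall x, D x -> (f x <= g x)%E) ->
  (\int[mu]_(x in D) f x <= \int[mu]_(x in D) g x)%E.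
Proof.
move=> f0 fg.
have g0 x : D x -> (0 <= g x)%E by move=> Dx; exact: le_trans (f0 _ Dx) (fg _ Dx).
rewrite (ge0_integralE _ f0) (ge0_integralE _ g0).
apply: ereal_sup_le => _ [h /= hf <-]; exists h => //= x.
apply: le_trans (hf x) _; rewrite /patch; case: ifP => // /[1!inE] Dx.
exact: fg.
Qed.

Lemma dopen_dball (R : realType) (M : Type) (d : M -> M -> R) x r :
  is_metric d -> dopen d (dball d x r).
Proof.
case=> _ _ _ tri y; rewrite /dball /= => xy.
exists (r - d x y); first by rewrite subr_gt0.
by move=> z /= yz; apply: le_lt_trans (tri x y z) _; rewrite -ltrBrDl.
Qed.

Lemma nneseries_le_bound (R : realType) (v : nat -> R) (B : R) :
  (forall n, 0 <= v n) -> (forall n, \sum_(j < n) v j <= B) ->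
  (\sum_(j <oo) (v j)%:E <= B%:E)%E.
Proof.
move=> v0 vB; apply: lime_le.
  by apply: is_cvg_ereal_nneg_natsum => n _; rewrite lee_fin.
by apply: nearW => n /=; rewrite big_mkord sumEFin lee_fin.
Qed.

Lemma upper_ahlfors_all_radii (R : realType) (dsp : measure_display)
    (M : measurableType dsp) (d : M -> M -> R) (nu : {measure set M -> \bar R})
    (Y W : set M) (u V : R) :
  measurable Y -> (forall w r, measurable (dball d w r `&` Y)) ->
  nu Y = V%:E -> 0 <= u -> upper_ahlfors d nu Y W u ->
  exists2 C : R, 0 < C & forall w, W w -> forall r, 0 < r ->
    (nu (dball d w r `&` Y) <= (C * r `^ u)%:E)%E.
Proof.
move=> mY mB nuYV u0 [r0 [r00 [c0 c00 small]]].
have [R0 R00 R0r0] : exists2 R0 : R, 0 < R0 & (R0%:E < r0)%E.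
  case: r0 r00 {small} => [x| |] // x0.
    by exists (x / 2); rewrite ?lte_fin ?divr_gt0 ?ltr_pdivrMr ?ltr_pMr ?ltr1n.
  by exists 1; rewrite ?ltry.
have V0 : 0 <= V by rewrite -lee_fin -nuYV measure_ge0.
have R0u : 0 < R0 `^ u by rewrite powR_gt0.
exists (c0 + V / R0 `^ u) => [|w Ww r r_gt0].
  by rewrite ltr_wpDr // divr_ge0 // ltW.
have [rR0|R0r] := ltP r R0.
  apply: le_trans (small w r Ww r_gt0 _) _; first exact: lt_trans R0r0.
  by rewrite lee_fin ler_wpM2r ?powR_ge0 // lerDl divr_ge0 // ltW.
have : (nu (dball d w r `&` Y) <= nu Y)%E by rewrite le_measure ?inE.
move/le_trans; apply; rewrite nuYV lee_fin mulrDl.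
apply: ler_wpDl; first by rewrite mulr_ge0 ?powR_ge0 ?ltW.
rewrite mulrAC ler_pdivlMr // ler_wpM2l //.
by apply: ge0_ler_powR => //; rewrite nnegrE ltW.
Qed.

Lemma gt0_powRE (R : realType) (t p : R) : 0 < t -> t `^ p = expR (p * ln t).
Proof. by move=> t0; rewrite /powR gt_eqF. Qed.

Lemma invpow_ge0 (R : realType) (s t : R) : (0 <= invpow s t)%E.
Proof. by rewrite /invpow; case: ifP => _; rewrite ?leey // lee_fin powR_ge0. Qed.

Lemma gt0_invpowE (R : realType) (s t : R) : 0 < t -> invpow s t = (t `^ (- s))%:E.
Proof. by move=> t0; rewrite /invpow gt_eqF ?andbF. Qed.

Section ball_series.
Context (R : realType) (M : Type) (d : M -> M -> R) (Y : set M) (w : M).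
Implicit Types (c r : nat -> R) (y : M).

Definition ball_series c r : M -> \bar R :=
  fun y => (\sum_(j <oo) (c j * \1_(dball d w (r j) `&` Y) y)%:E)%E.

Lemma ball_series_ge0 c r y : (forall j, 0 <= c j) -> (0 <= ball_series c r y)%E.
Proof. by move=> c0; apply: nneseries_ge0 => j _ _; rewrite lee_fin mulr_ge0. Qed.

Lemma ball_series_ge c r y k : (forall j, 0 <= c j) -> Y y -> d w y < r k ->
  ((c k)%:E <= ball_series c r y)%E.
Proof.
move=> c0 Yy yk; apply: le_trans (nneseries_lim_ge k.+1 _); last first.
  by move=> j _ _; rewrite lee_fin mulr_ge0.
rewrite big_nat_recr //= indicE mem_set ?mulr1; last by split.
by rewrite leeDr // sume_ge0 // => j _; rewrite lee_fin mulr_ge0.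
Qed.

Lemma ball_series_center c r y e : 0 < e -> (forall j, e <= c j) -> Y y ->
  (forall j, d w y < r j) -> ball_series c r y = +oo%E.
Proof.
move=> e0 ce Yy yr.
have c0 j : 0 <= c j by apply: le_trans (ce j); exact: ltW.
have ge_n n : ((n%:R * e)%:E <= ball_series c r y)%E.
  apply: le_trans (nneseries_lim_ge n _); last first.
    by move=> k _ _; rewrite lee_fin mulr_ge0.
  rewrite sumEFin lee_fin -[n in n%:R]subn0 mulr_natl -sumr_const_nat.
  by apply: ler_sum => k _; rewrite indicE mem_set ?mulr1 //; split; [exact: yr|].
move: ge_n; case: (ball_series c r y) => // [x|] ge_n.
  have := ge_n (Num.truncn (x / e)).+1; rewrite lee_fin.
  by rewrite -ler_pdivlMr // leNgt truncnS_gt.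
by have := ge_n 0%N; rewrite mul0r.
Qed.

End ball_series.

Definition nonneg_integral_le (R : realType) (dsp : measure_display)
    (M : measurableType dsp) (nu : {measure set M -> \bar R}) (Y : set M)
    (g : M -> \bar R) (B : R) : Prop :=
  [/\ measurable_fun Y g, forall y, Y y -> (0 <= g y)%E &
      (\int[nu]_(y in Y) g y <= B%:E)%E].

Section nonneg_integral_le.
Context (R : realType) (dsp : measure_display) (M : measurableType dsp).
Context (nu : {measure set M -> \bar R}) (Y : set M).
Hypothesis mY : measurable Y.

Lemma nonneg_integral_leD g1 g2 B1 B2 :
  nonneg_integral_le nu Y g1 B1 -> nonneg_integral_le nu Y g2 B2 ->
  nonneg_integral_le nu Y (fun y => g1 y + g2 y)%E (B1 + B2).
Proof.
case=> m1 p1 i1 [m2 p2 i2]; split => [|y Yy|]; first exact: emeasurable_funD.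
  by rewrite adde_ge0 ?p1 ?p2.
by rewrite ge0_integralD // EFinD leeD.
Qed.

Lemma nonneg_integral_leZ g k B : 0 <= k ->
  nonneg_integral_le nu Y g B ->
  nonneg_integral_le nu Y (fun y => k%:E * g y)%E (k * B).
Proof.
move=> k0 [mg g0 ig]; split => [|y Yy|]; first exact: emeasurable_funM.
  by rewrite mule_ge0 ?g0.
by rewrite ge0_integralZl ?lee_fin // EFinM lee_wpmul2l ?lee_fin.
Qed.

Lemma nonneg_integral_le_cst k V : 0 <= k -> nu Y = V%:E ->
  nonneg_integral_le nu Y (fun=> k%:E) (k * V).
Proof.
move=> k0 nuYV; split=> [|y _|]; [exact: measurable_cst|by rewrite lee_fin|].
by rewrite integral_cst // nuYV.
Qed.

Lemma ball_series_nonneg_integral_le d w (c r m : nat -> R) B :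
  (forall j, 0 <= c j) -> (forall j, measurable (dball d w (r j) `&` Y)) ->
  (forall j, (nu (dball d w (r j) `&` Y) <= (m j)%:E)%E) ->
  (forall n, \sum_(j < n) c j * m j <= B) ->
  nonneg_integral_le nu Y (ball_series d Y w c r) B.
Proof.
move=> c0 mB num sumB.
have m0 j : 0 <= m j by rewrite -lee_fin (le_trans _ (num j)) ?measure_ge0.
have term0 j y : (0 <= (c j * \1_(dball d w (r j) `&` Y) y)%:E)%E.
  by rewrite lee_fin mulr_ge0.
have mterm j : measurable_fun Y (fun y => (c j * \1_(dball d w (r j) `&` Y) y)%:E).
  by apply/measurable_EFinP; apply: measurable_funM.
split=> [|y _|]; [exact: ge0_emeasurable_sum|exact: ball_series_ge0|].
rewrite integral_nneseries //.
apply: le_trans (nneseries_le_bound (fun j => mulr_ge0 (c0 j) (m0 j)) sumB).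
apply: lee_nneseries => [j _ _|j _]; first exact: integral_ge0.
under eq_integral do rewrite EFinM.
rewrite ge0_integralZl ?lee_fin //; last exact/measurable_EFinP/measurable_indic.
by rewrite integral_indic // -setIA setIid EFinM lee_pmul // lee_fin.
Qed.

End nonneg_integral_le.

Lemma sum_geometric_le (R : realType) (A q : R) n : 0 <= A -> 0 < q < 1 ->
  \sum_(j < n) A * q ^+ j <= A / (1 - q).
Proof.
move=> A0 /andP[q0 q1].
have := geometric_le_lim n A0 q0 (_ : `|q| < 1); rewrite /series /= big_mkord; apply.
by rewrite gtr0_norm.
Qed.

Lemma near_shell_index (R : realType) (l t : R) : 0 < t -> t < expR l ->
  exists j : nat, l - j%:R - 1 < ln t <= l - j%:R.
Proof.
move=> t0 tl.
have shell : 0 <= l - ln t by rewrite subr_ge0 -ler_expR lnK ?posrE ?ltW.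
have /andP[j_le j_gt] := truncn_itv shell; rewrite -natr1 in j_gt.
by exists (Num.truncn (l - ln t)); apply/andP; split; lra.
Qed.

Lemma far_shell_index (R : realType) (l t : R) : expR l <= t ->
  exists k : nat, l + k%:R <= ln t < l + k%:R + 1.
Proof.
move=> lt; have t0 : 0 < t by exact: lt_le_trans (expR_gt0 l) lt.
have shell : 0 <= ln t - l by rewrite subr_ge0 -ler_expR lnK // posrE.
have /andP[k_le k_gt] := truncn_itv shell; rewrite -natr1 in k_gt.
by exists (Num.truncn (ln t - l)); apply/andP; split; lra.
Qed.

Lemma powRN_mul_le (R : realType) (a b t1 t2 : R) :
  0 < t1 -> t1 <= t2 -> 0 <= b -> t1 `^ (- a) * t2 `^ (- b) <= t1 `^ (- (a + b)).
Proof.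
move=> t10 t12 b0; have t20 : 0 < t2 by exact: lt_le_trans t12.
rewrite !gt0_powRE // -expRD ler_expR.
have : ln t1 <= ln t2 by rewrite ler_ln ?posrE.
nra.
Qed.

Lemma powRN_mul_le_scale (R : realType) (a b l t1 t2 : R) :
  0 < t1 -> expR l <= t2 -> 0 <= b ->
  t1 `^ (- a) * t2 `^ (- b) <= expR (- b * l) * t1 `^ (- a).
Proof.
move=> t10 lt2 b0; have t20 : 0 < t2 by exact: lt_le_trans (expR_gt0 l) lt2.
rewrite mulrC ler_wpM2r ?powR_ge0 // gt0_powRE // ler_expR.
have : l <= ln t2 by rewrite -ler_expR lnK ?posrE.
nra.
Qed.

(* [g] dominates the kernel on the points [y] closer to the pole [w] than to a
   second pole at distance [D] from [w]; [t] is the distance from [y] to it. *)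
Definition side_majorant (R : realType) (M : Type) (d : M -> M -> R) (Y : set M)
    (w : M) (a b D : R) (g : M -> \bar R) : Prop :=
  (forall y, Y y -> d w y = 0 -> g y = +oo%E) /\
  (forall y t, Y y -> 0 < d w y <= t -> D <= d w y + t ->
     ((d w y `^ (- a) * t `^ (- b))%:E <= g y)%E).

Lemma side_majorant_near_far (R : realType) (M : Type) (d : M -> M -> R)
    (Y : set M) (w : M) (a b l : R) (gN gF : M -> \bar R) : 0 <= b ->
  (forall y, Y y -> (0 <= gN y)%E) -> (forall y, Y y -> (0 <= gF y)%E) ->
  (forall y, Y y -> d w y = 0 -> gN y = +oo%E) ->
  (forall y, Y y -> 0 < d w y < expR l -> ((d w y `^ (- a))%:E <= gN y)%E) ->
  (forall y, Y y -> expR l <= d w y -> ((d w y `^ (- (a + b)))%:E <= gF y)%E) ->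
  side_majorant d Y w a b (2 * expR l)
    (fun y => (expR (- b * l))%:E * gN y + gF y)%E.
Proof.
move=> b0 gN0 gF0 gNoo near far.
have e0 : (0 <= (expR (- b * l))%:E)%E by rewrite lee_fin expR_ge0.
split=> [y Yy /(gNoo _ Yy) ->|y t Yy /andP[t10 t1t] Dt].
  rewrite gt0_muley ?lte_fin ?expR_gt0 // addye //.
  by rewrite gt_eqF // (lt_le_trans _ (gF0 _ Yy)).
have [t1l|lt1] := ltP (d w y) (expR l).
- apply: le_trans (leeDl _ (gF0 _ Yy)).
  apply: le_trans (lee_wpmul2l e0 (near _ Yy _)); last by rewrite t10.
  by rewrite -EFinM lee_fin powRN_mul_le_scale //; lra.
- apply: le_trans (leeDr _ (mule_ge0 e0 (gN0 _ Yy))).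
  by apply: le_trans (far _ Yy lt1); rewrite lee_fin powRN_mul_le.
Qed.

Section shell_majorants.
Context (R : realType) (dsp : measure_display) (M : measurableType dsp).
Context (d : M -> M -> R) (nu : {measure set M -> \bar R}) (Y : set M) (w : M).
Context (C u : R).
Hypotheses (mY : measurable Y) (mB : forall r, measurable (dball d w r `&` Y)).
Hypothesis C0 : 0 <= C.
Hypothesis growth : forall r, 0 < r -> (nu (dball d w r `&` Y) <= (C * r `^ u)%:E)%E.

Lemma near_majorant a l : 0 <= a -> a < u ->
  exists g, [/\ nonneg_integral_le nu Y g
                  (C * expR (a + u) / (1 - expR (a - u)) * expR ((u - a) * l)),
              forall y, Y y -> d w y = 0 -> g y = +oo%E &
              forall y, Y y -> 0 < d w y < expR l -> ((d w y `^ (- a))%:E <= g y)%E].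
Proof.
move=> a0 au.
(* [c j] is [t ^- a] at the inner edge of the shell [e^(l-j-1) < t <= e^(l-j)],
   which lies inside the ball of radius [r j]. *)
pose c j := expR (a * (j%:R + 1 - l)); pose r j := expR (l + 1 - j%:R).
have c0 j : 0 <= c j by exact: expR_ge0.
exists (ball_series d Y w c r); split.
- apply: (ball_series_nonneg_integral_le mY (m := fun j => C * r j `^ u)) => // [j|n].
    exact/growth/expR_gt0.
  have term j : c j * (C * r j `^ u) =
      C * expR (a + u) * expR ((u - a) * l) * expR (a - u) ^+ j.
    rewrite /c /r -expRM -expRM_natr mulrCA -!mulrA -!expRD.
    by congr (_ * expR _); ring.
  under eq_bigr do rewrite term.
  rewrite [leRHS]mulrAC; apply: sum_geometric_le.
    by rewrite !mulr_ge0 ?expR_ge0.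
  by rewrite expR_gt0 expR_lt1 subr_lt0.
- move=> y Yy /= dwy0; apply: (ball_series_center (e := expR (a * (1 - l)))).
  + exact: expR_gt0.
  + by move=> j; rewrite ler_expR ler_wpM2l // lerD2r lerDr.
  + exact: Yy.
  + by move=> j; rewrite dwy0 expR_gt0.
- move=> y Yy /andP[t0 tl].
  have [j /andP[j_gt j_le]] := near_shell_index t0 tl.
  apply: le_trans (ball_series_ge (k := j) c0 Yy _).
    by rewrite lee_fin gt0_powRE // ler_expR; nra.
  by rewrite /r -{1}[d w y]lnK ?posrE // ltr_expR; lra.
Qed.

Lemma far_majorant s l : 0 <= s -> u < s ->
  exists g, nonneg_integral_le nu Y g
              (C * expR u / (1 - expR (u - s)) * expR ((u - s) * l)) /\
            forall y, Y y -> expR l <= d w y -> ((d w y `^ (- s))%:E <= g y)%E.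
Proof.
move=> s0 us.
pose c k := expR (- s * (l + k%:R)); pose r k := expR (l + k%:R + 1).
have c0 k : 0 <= c k by exact: expR_ge0.
exists (ball_series d Y w c r); split.
- apply: (ball_series_nonneg_integral_le mY (m := fun k => C * r k `^ u)) => // [k|n].
    exact/growth/expR_gt0.
  have term k : c k * (C * r k `^ u) =
      C * expR u * expR ((u - s) * l) * expR (u - s) ^+ k.
    rewrite /c /r -expRM -expRM_natr mulrCA -!mulrA -!expRD.
    by congr (_ * expR _); ring.
  under eq_bigr do rewrite term.
  rewrite [leRHS]mulrAC; apply: sum_geometric_le.
    by rewrite !mulr_ge0 ?expR_ge0.
  by rewrite expR_gt0 expR_lt1 subr_lt0.
- move=> y Yy lt; have t0 : 0 < d w y by exact: lt_le_trans (expR_gt0 l) lt.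
  have [k /andP[k_le k_gt]] := far_shell_index lt.
  apply: le_trans (ball_series_ge (k := k) c0 Yy _).
    by rewrite lee_fin gt0_powRE // ler_expR; nra.
  by rewrite /r -{1}[d w y]lnK ?posrE // ltr_expR.
Qed.

Lemma truncated_far_majorant l (N : nat) : 0 <= u ->
  exists g, nonneg_integral_le nu Y g (N%:R * (C * expR u)) /\
            forall y, Y y -> expR l <= d w y < expR (l + N%:R) ->
              ((d w y `^ (- u))%:E <= g y)%E.
Proof.
move=> u0.
pose c k := if (k < N)%N then expR (- u * (l + k%:R)) else 0.
pose r k := expR (l + k%:R + 1).
have c0 k : 0 <= c k by rewrite /c; case: ifP => // _; exact: expR_ge0.
exists (ball_series d Y w c r); split.
- apply: (ball_series_nonneg_integral_le mY (m := fun k => C * r k `^ u)) => // [k|n].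
    exact/growth/expR_gt0.
  have term k : c k * (C * r k `^ u) = if (k < N)%N then C * expR u else 0.
    rewrite /c; case: ifP => _; last by rewrite mul0r.
    by rewrite /r -expRM mulrCA -expRD; congr (_ * expR _); ring.
  under eq_bigr do rewrite term.
  have -> : \sum_(k < n) (if (k < N)%N then C * expR u else 0) =
            (minn n N)%:R * (C * expR u).
    elim: n => [|n IH]; first by rewrite big_ord0 min0n mul0r.
    rewrite big_ord_recr /= IH; case: ltnP => [nN|Nn].
      by rewrite (minn_idPl nN) -natr1 mulrDl mul1r.
    by rewrite (minn_idPr (leqW Nn)) addr0.
  by rewrite ler_wpM2r ?mulr_ge0 ?expR_ge0 // ler_nat geq_minr.
- move=> y Yy /andP[lt tN]; have t0 : 0 < d w y by exact: lt_le_trans (expR_gt0 l) lt.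
  have [k /andP[k_le k_gt]] := far_shell_index lt.
  have kN : (k < N)%N.
    rewrite -(ltr_nat R); move: tN; rewrite -{1}[d w y]lnK ?posrE // ltr_expR; lra.
  apply: le_trans (ball_series_ge (k := k) c0 Yy _).
    by rewrite lee_fin /c kN gt0_powRE // ler_expR; nra.
  by rewrite /r -{1}[d w y]lnK ?posrE // ltr_expR.
Qed.

Lemma subcritical_side_majorant a b D V :
  0 <= a -> 0 <= b -> a + b < u -> nu Y = V%:E ->
  exists g, nonneg_integral_le nu Y g
              (C * expR (a + b + u) / (1 - expR (a + b - u)) + V) /\
            side_majorant d Y w a b D g.
Proof.
move=> a0 b0 abu nuYV.
have [g [ig goo gle]] := near_majorant 0 (addr_ge0 a0 b0) abu.
have [_ g0 _] := ig.
exists (fun y => g y + 1%:E)%E; split.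
  have := nonneg_integral_leD mY ig (nonneg_integral_le_cst mY ler01 nuYV).
  by rewrite mulr0 expR0 !mulr1 mul1r.
split=> [y Yy /(goo _ Yy) -> //|y t Yy /andP[t10 t1t] _].
apply: le_trans (_ : ((d w y `^ (- (a + b)))%:E <= _)%E).
  by rewrite lee_fin powRN_mul_le.
have [t1|t1] := ltP (d w y) 1.
- apply: le_trans (leeDl _ _) ; last by rewrite lee_fin.
  by apply: gle; rewrite // expR0 t10 t1.
- apply: le_trans (leeDr _ (g0 _ Yy)); rewrite lee_fin gt0_powRE // expR_le1.
  have : 0 <= ln (d w y) by rewrite ln_ge0.
  nra.
Qed.

Lemma supercritical_side_majorant a b l :
  0 <= a -> a < u -> 0 <= b -> u < a + b ->
  exists g, nonneg_integral_le nu Y g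
              ((C * expR (a + u) / (1 - expR (a - u)) +
                C * expR u / (1 - expR (u - (a + b)))) * expR ((u - (a + b)) * l)) /\
            side_majorant d Y w a b (2 * expR l) g.
Proof.
move=> a0 au b0 uab.
have [gN [iN Noo Nle]] := near_majorant l a0 au.
have [gF [iF Fle]] := far_majorant l (addr_ge0 a0 b0) uab.
have [[_ gN0 _] [_ gF0 _]] := (iN, iF).
exists (fun y => (expR (- b * l))%:E * gN y + gF y)%E; split.
  set Kn := C * expR (a + u) / _; set Kf := C * expR u / _.
  have -> : (Kn + Kf) * expR ((u - (a + b)) * l) =
      expR (- b * l) * (Kn * expR ((u - a) * l)) + Kf * expR ((u - (a + b)) * l).
    by rewrite mulrDl mulrCA -expRD; congr (_ * expR _ + _); ring.
  exact (nonneg_integral_leD mY (nonneg_integral_leZ mY (expR_ge0 (- b * l)) iN) iF).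
exact: side_majorant_near_far.
Qed.

Lemma critical_side_majorant a b l (N : nat) V :
  0 <= a -> a < u -> 0 <= b -> a + b = u -> 0 <= l + N%:R -> nu Y = V%:E ->
  exists g, nonneg_integral_le nu Y g
              (C * expR (a + u) / (1 - expR (a - u)) + N%:R * (C * expR u) + V) /\
            side_majorant d Y w a b (2 * expR l) g.
Proof.
move=> a0 au b0 abu lN nuYV.
have u0 : 0 <= u by rewrite -abu addr_ge0.
have [gN [iN Noo Nle]] := near_majorant l a0 au.
have [gT [iT Tle]] := truncated_far_majorant l N u0.
have [[_ gN0 _] [_ gT0 _]] := (iN, iT).
exists (fun y => (expR (- b * l))%:E * gN y + (gT y + 1%:E))%E; split.
  set Kn := C * expR (a + u) / _.
  have -> : Kn + N%:R * (C * expR u) + V =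
      expR (- b * l) * (Kn * expR ((u - a) * l)) + (N%:R * (C * expR u) + 1 * V).
    rewrite [expR (- b * l) * _]mulrCA -expRD mul1r addrA.
    by rewrite (_ : - b * l + (u - a) * l = 0) ?expR0 ?mulr1 // -abu; ring.
  exact (nonneg_integral_leD mY (nonneg_integral_leZ mY (expR_ge0 (- b * l)) iN)
    (nonneg_integral_leD mY iT (nonneg_integral_le_cst mY ler01 nuYV))).
apply: side_majorant_near_far => // [y Yy|y Yy lt].
  by rewrite adde_ge0 ?gT0.
rewrite abu; have [tN|Nt] := ltP (d w y) (expR (l + N%:R)).
  by apply: le_trans (leeDl _ _); [apply: Tle; rewrite // lt tN|].
apply: le_trans (leeDr _ (gT0 _ Yy)); rewrite lee_fin.
have t0 : 0 < d w y by exact: lt_le_trans (expR_gt0 l) lt.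
rewrite gt0_powRE // expR_le1.
have : 0 <= ln (d w y).
  by apply/ln_ge0/(le_trans _ Nt); rewrite -[leLHS]expR0 ler_expR.
nra.
Qed.

End shell_majorants.

Lemma kernel_integral_le (R : realType) (dsp : measure_display)
    (M : measurableType dsp) (d : M -> M -> R) (nu : {measure set M -> \bar R})
    (Y : set M) (x z : M) (s1 s2 : R) (gx gz : M -> \bar R) (Bx Bz : R) :
  is_metric d -> measurable Y ->
  nonneg_integral_le nu Y gx Bx -> nonneg_integral_le nu Y gz Bz ->
  side_majorant d Y x s1 s2 (d x z) gx -> side_majorant d Y z s2 s1 (d x z) gz ->
  (\int[nu]_(y in Y) (invpow s1 (d x y) * invpow s2 (d y z)) <= (Bx + Bz)%:E)%E.
Proof.
case=> d0 d_eq0 dC dtri mY ix iz [xoo xle] [zoo zle].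
have [[_ gx0 _] [_ gz0 _]] := (ix, iz).
have [_ _ ixz] := nonneg_integral_leD mY ix iz.
apply: le_trans ixz; apply: ge0_le_integral_nonmeasurable => [y _|y Yy].
  by rewrite mule_ge0 ?invpow_ge0.
have [/(xoo _ Yy) ->|xy0] := eqVneq (d x y) 0.
  by rewrite addye ?leey // gt_eqF // (lt_le_trans _ (gz0 _ Yy)).
have [/(zoo _ Yy) ->|zy0] := eqVneq (d z y) 0.
  by rewrite addey ?leey // gt_eqF // (lt_le_trans _ (gx0 _ Yy)).
have [xy zy] : 0 < d x y /\ 0 < d z y by rewrite !lt0r xy0 zy0 !d0.
rewrite (dC y z) !gt0_invpowE // -EFinM.
have tri : d x z <= d x y + d z y by rewrite (dC z y) dtri.
have [xy_le|zy_lt] := leP (d x y) (d z y).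
  by apply: le_trans (leeDl _ (gz0 _ Yy)); apply: xle; rewrite ?xy.
apply: le_trans (leeDr _ (gx0 _ Yy)); rewrite mulrC.
by apply: zle; rewrite // ?zy ?(ltW zy_lt) // addrC.
Qed.

Section kernel_estimates.
Context (R : realType) (dsp : measure_display) (M : measurableType dsp).
Context (d : M -> M -> R) (nu : {measure set M -> \bar R}) (Y W : set M).
Context (C u V s1 s2 : R).
Hypotheses (dm : is_metric d) (mY : measurable Y).
Hypothesis mB : forall w r, measurable (dball d w r `&` Y).
Hypothesis nuYV : nu Y = V%:E.
Hypothesis C0 : 0 <= C.
Hypothesis growth : forall w, W w -> forall r, 0 < r ->
  (nu (dball d w r `&` Y) <= (C * r `^ u)%:E)%E.
Hypotheses (s10 : 0 <= s1) (s20 : 0 <= s2).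

Local Notation kernel_integral x z :=
  (\int[nu]_(y in Y) (invpow s1 (d x y) * invpow s2 (d y z)))%E.

Let Kn a := C * expR (a + u) / (1 - expR (a - u)).

Lemma subcritical_kernel_integral : s1 + s2 < u ->
  exists K, forall x z, W x -> W z -> (kernel_integral x z <= K%:E)%E.
Proof.
move=> su; exists (Kn (s1 + s2) + V + (Kn (s1 + s2) + V)) => x z Wx Wz.
have [gx [ix sx]] := subcritical_side_majorant mY (mB x) C0 (growth Wx)
  (d x z) s10 s20 su nuYV.
have su' : s2 + s1 < u by rewrite addrC.
have [gz [iz sz]] := subcritical_side_majorant mY (mB z) C0 (growth Wz)
  (d x z) s20 s10 su' nuYV.
rewrite [s2 + s1]addrC in iz.
exact: kernel_integral_le dm mY ix iz sx sz.
Qed.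

Let dist_gt0 x z : x <> z -> 0 < d x z.
Proof.
by case: dm => d0 d_eq0 _ _ xz; rewrite lt0r d0 andbT; apply/eqP => /d_eq0.
Qed.

Let half_dist x z : x <> z -> 2 * expR (ln (d x z / 2)) = d x z.
Proof. by move=> /dist_gt0 xz; rewrite lnK ?posrE ?divr_gt0 // mulrC divfK. Qed.

Lemma supercritical_kernel_integral : s1 < u -> s2 < u -> u < s1 + s2 ->
  exists K, forall x z, W x -> W z -> x <> z ->
    (kernel_integral x z <= (K * d x z `^ (u - (s1 + s2)))%:E)%E.
Proof.
move=> s1u s2u us.
pose Kf := C * expR u / (1 - expR (u - (s1 + s2))).
exists ((Kn s1 + Kf + (Kn s2 + Kf)) * expR ((s1 + s2 - u) * ln 2)) => x z Wx Wz xz.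
set l := ln (d x z / 2).
have [gx [ix sx]] := supercritical_side_majorant mY (mB x) C0 (growth Wx)
  l s10 s1u s20 us.
have us' : u < s2 + s1 by rewrite addrC.
have [gz [iz sz]] := supercritical_side_majorant mY (mB z) C0 (growth Wz)
  l s20 s2u s10 us'.
rewrite half_dist // in sx sz; rewrite [s2 + s1]addrC in iz.
apply: le_trans (kernel_integral_le dm mY ix iz sx sz) _.
have -> : expR ((u - (s1 + s2)) * l) =
    expR ((s1 + s2 - u) * ln 2) * d x z `^ (u - (s1 + s2)).
  rewrite gt0_powRE ?dist_gt0 // -expRD /l ln_div ?posrE ?dist_gt0 //.
  by congr expR; ring.
by rewrite -mulrDl mulrA.
Qed.

Lemma critical_kernel_integral : s1 < u -> s2 < u -> s1 + s2 = u ->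
  exists K, forall x z, W x -> W z -> x <> z ->
    (kernel_integral x z <= (K * (1 + `|ln (d x z)|))%:E)%E.
Proof.
move=> s1u s2u su.
pose A := C * expR u; pose P := Kn s1 + Kn s2 + 2 * V.
exists (`|P| + 2 * A * (ln 2 + 2)) => x z Wx Wz xz.
(* [N] shells lead from radius [expR l = d x z / 2] beyond radius [1]. *)
set l := ln (d x z / 2); pose N := (Num.truncn `|l|).+1.
have /andP[N_le N_gt] : N%:R - 1 <= `|l| < N%:R.
  by rewrite /N truncnS_gt andbT -natr1 addrK truncn_le normr_ge0.
have lN : 0 <= l + N%:R by move: (ler_norm (- l)); rewrite normrN; lra.
have [gx [ix sx]] := critical_side_majorant mY (mB x) C0 (growth Wx)
  s10 s1u s20 su lN nuYV.
have su' : s2 + s1 = u by rewrite addrC.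
have [gz [iz sz]] := critical_side_majorant mY (mB z) C0 (growth Wz)
  s20 s2u s10 su' lN nuYV.
rewrite half_dist // in sx sz.
apply: le_trans (kernel_integral_le dm mY ix iz sx sz) _; rewrite lee_fin.
have ln2 : 0 <= ln (2 : R) by rewrite ln_ge0 // ler1n.
have A0 : 0 <= A by rewrite mulr_ge0 ?expR_ge0.
have lL : `|l| <= `|ln (d x z)| + ln 2.
  rewrite /l ln_div ?posrE ?dist_gt0 //.
  by apply: le_trans (ler_normB _ _) _; rewrite (ger0_norm ln2).
have NL : N%:R <= `|ln (d x z)| + ln 2 + 1 by lra.
have := ler_wpM2l A0 NL.
have := mulr_ge0 (normr_ge0 P) (normr_ge0 (ln (d x z))).
have := mulr_ge0 (mulr_ge0 A0 ln2) (normr_ge0 (ln (d x z))).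
have := mulr_ge0 A0 (normr_ge0 (ln (d x z))).
have := ler_norm P; rewrite /P /Kn -/A; nra.
Qed.

End kernel_estimates.

Theorem proposition4p1 (R : realType) (dsp : measure_display)
  (M : measurableType dsp) (d : M -> M -> R) (X Y Z : set M)
  (nu : {measure set M -> \bar R}) (uY s1 s2 : R) :
  is_metric d ->
  measurable Y ->
  (forall O : set M, dopen d O -> measurable (O `&` Y)) ->
  (nu Y < +oo)%E ->
  0 < uY ->
  upper_ahlfors d nu Y (X `|` Z) uY ->
  0 <= s1 -> s1 < uY -> 0 <= s2 -> s2 < uY ->
  (s1 + s2 = uY -> strongly_upper_ahlfors d nu Y (X `|` Z) uY) ->
  exists2 c : R, 0 < c &
    forall x z, X x -> Z z ->
      [/\ (s1 + s2 < uY ->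
             (\int[nu]_(y in Y) (invpow s1 (d x y) * invpow s2 (d y z))
               <= (c * (1 + d x z `^ (uY - (s1 + s2))))%:E)%E),
          (x <> z -> s1 + s2 = uY ->
             (\int[nu]_(y in Y) (invpow s1 (d x y) * invpow s2 (d y z))
               <= (c * (1 + `|ln (d x z)|))%:E)%E) &
          (x <> z -> uY < s1 + s2 ->
             (\int[nu]_(y in Y) (invpow s1 (d x y) * invpow s2 (d y z))
               <= (c * d x z `^ (uY - (s1 + s2)))%:E)%E)].
Proof.
move=> dm mY mO nuY u0 ahlfors s10 s1u s20 s2u _.
have mB w r : measurable (dball d w r `&` Y) by apply: mO; exact: dopen_dball.
have [V nuYV] : exists V, nu Y = V%:E.
  by exists (fine (nu Y)); rewrite fineK // ge0_fin_numE ?measure_ge0.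
have [C C0 growth] := upper_ahlfors_all_radii mY mB nuYV (ltW u0) ahlfors.
have le_c K (f : R) : 0 <= f -> K * f <= (1 + `|K|) * f.
  by move=> f0; rewrite ler_wpM2r // (le_trans (ler_norm K)) // lerDr.
case: (ltgtP (s1 + s2) uY) => [sub|sup|crit].
- have [K HK] :=
    subcritical_kernel_integral dm mY mB nuYV (ltW C0) growth s10 s20 sub.
  exists (1 + `|K|) => [|x z Xx Zz]; first by rewrite ltr_pwDl.
  split=> [_|_ h|//]; last by move: sub; rewrite h ltxx.
  apply: (le_trans (HK x z (or_introl Xx) (or_intror Zz))); rewrite lee_fin.
  have := le_c K 1 ler01; rewrite !mulr1 => /le_trans; apply.
  by rewrite ler_peMr ?lerDl ?powR_ge0 // ltW.
- have [K HK] :=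
    supercritical_kernel_integral dm mY mB (ltW C0) growth s10 s20 s1u s2u sup.
  exists (1 + `|K|) => [|x z Xx Zz]; first by rewrite ltr_pwDl.
  split=> [//|_ h|xz _]; first by move: sup; rewrite h ltxx.
  apply: (le_trans (HK x z (or_introl Xx) (or_intror Zz) xz)).
  by rewrite lee_fin le_c ?powR_ge0.
- have [K HK] :=
    critical_kernel_integral dm mY mB nuYV (ltW C0) growth s10 s20 s1u s2u crit.
  exists (1 + `|K|) => [|x z Xx Zz]; first by rewrite ltr_pwDl.
  split=> [//|xz _|//].
  apply: (le_trans (HK x z (or_introl Xx) (or_intror Zz) xz)).
  by rewrite lee_fin le_c // addr_ge0 ?normr_ge0.
Qed.
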